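(* Let $\mathbf{C}$ be a category enriched over $\mathbf{Top}$ all of whose morphisms are monomorphisms, let $C, D \in \mathrm{Ob}(\mathbf{C})$ be hom-equivalent, and let $\mathfrak{G} = (G_A)_{A \in \mathrm{Ob}(\mathbf{C})}$ be a family of groups with $G_A \le \mathrm{Aut}_\mathbf{C}(A)$ for all $A$. Let $A \in \mathrm{Ob}(\mathbf{C})$ be such that $\hom(A,C) \ne \varnothing$. (a) $T_\mathbf{C}(A,C) = T_\mathbf{C}(A,D)$. (b) If $\hom(A,S)$ is locally compact second-countable Hausdorff for every $S \in \mathrm{Ob}(\mathbf{C})$ and $G_A$ is a finite discrete group, then $T^\mathfrak{G}_\mathbf{C}(A,C) = T^\mathfrak{G}_\mathbf{C}(A,D)$.
   Context: Objects $C, D$ are hom-equivalent if $\hom(C,D) \ne \varnothing$ and $\hom(D,C) \ne\varnothing$. A category is enriched over $\mathbf{Top}$ if each homset is a topological space and composition is continuous. $\mathrm{Aut}_\mathbf{C}(A)$ is the group of invertible morphisms $A\to A$ with the subspace topology from $\hom(A,A)$. For $f,g \in \hom(A,X)$, $f \sim_\mathfrak{G} g$ iff $f = g\cdot\alpha$ for some $\alpha \in G_A$; $\binom{X}{A}_\mathfrak{G} = \hom(A,X)/{\sim_\mathfrak{G}}$ with the quotient topology; $w \cdot \binom{X}{A}_\mathfrak{G} = \{(w\cdot f)/{\sim_\mathfrak{G}} : f \in \hom(A,X)\}$ for $w\in\hom(X,Y)$. A Borel $k$-coloring is a map to $\{0,\dots,k-1\}$ with Borel fibers. $S \overset{\mathfrak{G}}{\longrightarrow}_\flat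 (S)^A_{k,n}$ means: every Borel $k$-coloring $\chi$ of $\binom{S}{A}_\mathfrak{G}$ admits $w \in \hom(S,S)$ with $|\chi(w \cdot \binom{S}{A}_\mathfrak{G})| \le n$. $T^\mathfrak{G}_\mathbf{C}(A,S)$ is the least positive integer $n$ with $S \overset{\mathfrak{G}}{\longrightarrow}_\flat (S)^A_{k,n}$ for all $k \ge 2$ ($\infty$ if none). $T_\mathbf{C}(A,S)$ is this quantity for the trivial groups $\{\mathrm{id}_A\}$ (Borel colorings of $\hom(A,S)$). *)

From HB Require Import structures.
From mathcomp Require Import all_boot all_order all_algebra.
From mathcomp Require Import all_classical all_reals all_analysis.

Set Implicit Arguments.
Unset Strict Implicit.
Unset Printing Implicit Defensive.

Local Open Scope classical_set_scope.

Record TopCat := {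
  ob : Type;
  chom : ob -> ob -> topologicalType;
  comp : forall A B C : ob, chom B C -> chom A B -> chom A C;
  idm : forall A : ob, chom A A;
  comp_assoc : forall (A B C D : ob) (h : chom C D) (g : chom B C) (f : chom A B),
      comp h (comp g f) = comp (comp h g) f;
  comp_idl : forall (A B : ob) (f : chom A B), comp (idm B) f = f;
  comp_idr : forall (A B : ob) (f : chom A B), comp f (idm A) = f;
  comp_cont : forall A B C : ob,
      continuous (fun p : chom B C * chom A B => comp p.1 p.2)
}.

Arguments comp {t A B C}.
Arguments idm {t}.

Definition all_mono (K : TopCat) : Prop :=
  forall (A B C : ob K) (f : chom B C) (g h : chom A B),
    comp f g = comp f h -> g = h.

Definition hom_equiv (K : TopCat) (C D : ob K) : Prop :=
  inhabited (chom C D) /\ inhabited (chom D C).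

Definition is_iso (K : TopCat) (A : ob K) (a : chom A A) : Prop :=
  exists b : chom A A, comp a b = idm A /\ comp b a = idm A.

Definition subgroup_Aut (K : TopCat) (A : ob K) (G : set (chom A A)) : Prop :=
  [/\ G (idm A),
      (forall a, G a -> is_iso a),
      (forall a b, G a -> G b -> G (comp a b)) &
      (forall a b, G a -> comp a b = idm A -> G b)].

Definition finite_discrete (K : TopCat) (A : ob K) (G : set (chom A A)) : Prop :=
  finite_set G /\
  forall g, G g -> exists U : set (chom A A), open U /\ U `&` G = [set g].

Section Quotient.
Variables (K : TopCat) (A X : ob K) (G : set (chom A A)).

Definition simG (f g : chom A X) : Prop := exists2 a, G a & f = comp g a.

Definition clsG (f : chom A X) : set (chom A X) := [set g | simG f g].

(* the quotient (X choose A)_G, as the type of equivalence classes *)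
Definition binom : Type := {S : set (chom A X) | exists f, S = clsG f}.

Definition proj (f : chom A X) : binom := exist _ (clsG f) (ex_intro _ f erefl).

Definition quot_open (U : set binom) : Prop := open (proj @^-1` U).

Definition quot_borel (U : set binom) : Prop := <<s quot_open >> U.

(* w . (X choose A)_G for w : chom(X,Y); here Y = X *)
Definition wbinom (w : chom X X) : set binom := [set proj (comp w f) | f in setT].

Definition borel_coloring (k : nat) (chi : binom -> 'I_k) : Prop :=
  forall i : 'I_k, quot_borel (chi @^-1` [set i]).

Definition arrow (k n : nat) : Prop :=
  forall chi : binom -> 'I_k, borel_coloring chi ->
    exists w : chom X X, exists T : {set 'I_k},
      (#|T| <= n)%N /\ forall q, wbinom w q -> chi q \in T.

End Quotient.

(* least positive n satisfying P, None (= infinity) if there is none *)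
Definition least_pos (P : nat -> Prop) : option nat :=
  match pselect (exists n, (0 < n)%N /\ P n) with
  | left h =>
      Some (@ex_minn (fun n => `[< (0 < n)%N /\ P n >])
              (let: ex_intro n hn := h in ex_intro _ n (asboolT hn)))
  | right _ => None
  end.

Definition TG (K : TopCat) (A S : ob K) (G : set (chom A A)) : option nat :=
  least_pos (fun n => forall k, (2 <= k)%N -> arrow S G k n).

Definition Ttriv (K : TopCat) (A S : ob K) : option nat :=
  TG S [set idm A].

(* Composition with u : C -> D maps hom(A,C) continuously to hom(A,D) and
   respects right translation by G_A, so it descends to a continuous, hence
   Borel, map between the quotients (C choose A)_G and (D choose A)_G.  A Borel
   colouring of the latter pulls back to one of the former; if w : C -> C makes
   the pulled-back colouring take at most n values on w . (C choose A)_G, then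
   u w v, for any v : D -> C, does the same on (D choose A)_G.  By symmetry C and
   D satisfy the same partition arrows, so their Ramsey degrees coincide. *)
From Pilot Require Import Defs.
From mathcomp Require Import all_boot all_order all_algebra.
From mathcomp Require Import all_classical all_reals all_analysis.

Local Open Scope classical_set_scope.
Local Notation cmp := Defs.comp.

Lemma g_sigma_preimage (aT rT : Type) (f : aT -> rT)
    (GA : set_system aT) (GR : set_system rT) :
  (forall B, GR B -> <<s GA >> (f @^-1` B)) ->
  forall B, <<s GR >> B -> <<s GA >> (f @^-1` B).
Proof.
move=> GRA B GRB; suff : image_set_system setT f <<s GA >> B.
  by rewrite /image_set_system /= setTI.
apply: smallest_sub GRB; first exact/sigma_algebra_image/smallest_sigma_algebra.
by move=> B' GRB'; rewrite /image_set_system /= setTI; exact: GRA.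
Qed.

Lemma continuous_postcomp {K : TopCat} (A : ob K) {X Y : ob K} (u : chom X Y) :
  continuous (fun f : chom A X => cmp u f).
Proof.
move=> f; apply: (@continuous_comp _ _ _ (fun f : chom A X => (u, f))
  (fun p : chom X Y * chom A X => cmp p.1 p.2)); last exact: comp_cont.
by apply: cvg_pair; [exact: cvg_cst | exact: cvg_id].
Qed.

Lemma subgroup_Aut_idm {K : TopCat} (A : ob K) : subgroup_Aut [set idm A].
Proof.
split => //.
- by move=> a ->; exists (idm A); rewrite comp_idl.
- by move=> a b -> ->; rewrite comp_idl.
- by move=> a b -> /=; rewrite comp_idl.
Qed.

Section QuotientMap.
Context {K : TopCat} {A : ob K} {G : set (chom A A)}.
Hypothesis HG : subgroup_Aut G.

Lemma clsG_refl {X : ob K} (f : chom A X) : clsG G f f.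
Proof. by exists (idm A); [case: HG | rewrite comp_idr]. Qed.

Lemma clsG_comp {X : ob K} (f : chom A X) (a : chom A A) :
  G a -> clsG G (cmp f a) = clsG G f.
Proof.
move=> Ga; case: HG => _ Giso GM Ginv.
apply/seteqP; split => g /= [b Gb E].
- have [a' [aa' _]] := Giso a Ga.
  exists (cmp b a'); first exact/GM/(Ginv a).
  by rewrite comp_assoc -E -comp_assoc aa' comp_idr.
- by exists (cmp b a); [exact: GM | rewrite E comp_assoc].
Qed.

Lemma proj_clsG {X : ob K} (f g : chom A X) :
  clsG G f = clsG G g -> Defs.proj G f = Defs.proj G g.
Proof. by move=> E; apply: eq_sig_hprop => // ? ? ?; exact: Prop_irrelevance. Qed.

Definition binom_repr {X : ob K} (q : binom X G) : chom A X :=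
  projT1 (cid (proj2_sig q)).

Lemma binom_reprK {X : ob K} (q : binom X G) :
  Defs.proj G (binom_repr q) = q.
Proof.
apply: eq_sig_hprop => [? ? ?|]; first exact: Prop_irrelevance.
by symmetry; exact: (projT2 (cid (proj2_sig q))).
Qed.

Definition binom_map {X Y : ob K} (u : chom X Y) (q : binom X G) : binom Y G :=
  Defs.proj G (cmp u (binom_repr q)).

Lemma binom_map_proj {X Y : ob K} (u : chom X Y) (f : chom A X) :
  binom_map u (Defs.proj G f) = Defs.proj G (cmp u f).
Proof.
rewrite /binom_map; set g := binom_repr _.
have /(congr1 sval) /= cls_gf : Defs.proj G g = Defs.proj G f.
  exact: binom_reprK.
have := clsG_refl g; rewrite cls_gf => -[a Ga ->].
by apply: proj_clsG; rewrite comp_assoc clsG_comp.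
Qed.

Lemma quot_borel_binom_map {X Y : ob K} (u : chom X Y) (B : set (binom Y G)) :
  quot_borel B -> quot_borel (binom_map u @^-1` B).
Proof.
apply: g_sigma_preimage => U oU; apply: sub_sigma_algebra; rewrite /quot_open.
have -> : Defs.proj G @^-1` (binom_map u @^-1` U) =
          (fun f : chom A X => cmp u f) @^-1` (Defs.proj G @^-1` U).
  by apply/seteqP; split => f /=; rewrite binom_map_proj.
by move: (continuous_postcomp A u) => /continuousP; apply.
Qed.

Lemma arrow_transfer {C D : ob K} (u : chom C D) (v : chom D C) k n :
  arrow C G k n -> arrow D G k n.
Proof.
move=> arrowC chi chi_borel.
have [w [T [cardT chiT]]] :=
  arrowC (chi \o binom_map u) (fun i => quot_borel_binom_map u _ (chi_borel i)).
exists (cmp u (cmp w v)), T; split => // _ [f _ <-].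
have := chiT (Defs.proj G (cmp w (cmp v f))).
rewrite /= binom_map_proj !comp_assoc; apply.
by exists (cmp v f) => //; rewrite comp_assoc.
Qed.

Lemma TG_hom_equiv {C D : ob K} : hom_equiv C D -> TG C G = TG D G.
Proof.
move=> [[u] [v]]; rewrite /TG; congr least_pos.
apply: funext => n; apply: propext.
split => arrow_n k k_ge2.
- by apply: (arrow_transfer u v); exact: arrow_n.
- by apply: (arrow_transfer v u); exact: arrow_n.
Qed.

End QuotientMap.

Theorem corollary4p10 (K : TopCat) (Hmono : all_mono K) (C D : ob K)
  (HCD : hom_equiv C D) (G : forall A : ob K, set (chom A A))
  (HG : forall A : ob K, subgroup_Aut (G A)) (A : ob K)
  (HAC : inhabited (chom A C)) :
  Ttriv A C = Ttriv A D /\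
  ((forall S : ob K, [/\ locally_compact [set: chom A S],
                         @second_countable (chom A S) &
                         hausdorff_space (chom A S)]) ->
   finite_discrete (G A) ->
   TG C (G A) = TG D (G A)).
Proof.
split; first exact: (TG_hom_equiv (subgroup_Aut_idm A) HCD).
by move=> _ _; exact: (@TG_hom_equiv K A (G A) (HG A) C D HCD).
Qed.
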